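(* Let $\mathcal{M}=(S,A,\delta)$ be a finite fuzzy transition system with rational membership degrees and let $\gamma\in(0,1)$ be rational. Then $d^\gamma_f$ is a rational vector (indexed by $S\times S$) whose bit size is bounded by a polynomial in $\|\mathcal{M}\|$ and $\|\gamma\|$.
   Context: A fuzzy set on a finite set $X$ is a map $\mu:X\to[0,1]$; $\mathcal{F}(X)$ is the set of fuzzy sets on $X$; $\mu(U)=\max_{x\in U}\mu(x)$; $\mathsf{Supp}(\mu)=\{x\mid \mu(x)>0\}$. A fuzzy transition system is $\mathcal{M}=(S,A,\delta)$ with $S,A$ finite and $\delta:S\times A\to\mathcal{P}(\mathcal{F}(S))$, each $\delta(s,a)$ finite. $\|\mathcal{M}\|=|S|+\sum_{s,a,\mu\in\delta(s,a)}\|\mathsf{Supp}(\mu)\|$, where for a finite set of rationals its size is the total number of bits to encode its elements in binary as fractions; $\|\gamma\|$ is the bit size of $\gamma$. $\mathcal{D}(S)$ is the set of pseudo-ultrametrics $d:S\times S\to[0,1]$, ordered pointwise. Lifting: $\hat d(\mu,\eta)=1$ if $\mu(S)\ne\eta(S)$, and otherwise $\hat d(\mu,\eta)$ is the minimum of $\max_{u,v}\min(d(u,v),x_{uv})$ over $x_{uv}\ge0$ with $\max_v x_{uv}=\mu(u)$ for all $u$ and $\max_u x_{uv}=\eta(v)$ for all $v$. For finite $Z\subseteq\mathcal{F}(S)$: $\hat d(\mu,Z)=\min_{\eta\in Z}\hat d(\mu,\eta)$ if $Z\ne\emptyset$, else $1$. Hausdorff distance: $H_{\hat d}(\emptyset,\emptyset)=0$,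 otherwise $H_{\hat d}(Y,Z)=\max(\max_{\mu\in Y}\hat d(\mu,Z),\max_{\eta\in Z}\hat d(\eta,Y))$. $\Delta(d)(s,t)=\gamma\cdot\max_{a\in A}H_{\hat d}(\delta(s,a),\delta(t,a))$ is monotone on $\mathcal{D}(S)$, and $d^\gamma_f$ is its least fixpoint. *)

From HB Require Import structures.
From mathcomp Require Import all_boot all_order all_algebra.
From mathcomp Require Import boolp classical_sets reals.
Set Implicit Arguments. Unset Strict Implicit. Unset Printing Implicit Defensive.
Import Order.TTheory GRing.Theory Num.Theory.
Local Open Scope ring_scope.

(* number of binary digits of n (1 for n = 0) *)
Definition bitlen (n : nat) : nat := (trunc_log 2 n).+1.
(* bits to write a rational as a signed fraction numq/denq in binary *)
Definition ratsize (q : rat) : nat :=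
  (1 + bitlen `|numq q| + bitlen `|denq q|)%N.

Section FTS.
Variables (S A : finType).

(* A fuzzy transition system with rational membership degrees:
   delta s a is the finite set (duplicate-free list) delta(s,a). *)
Definition fts := S -> A -> seq {ffun S -> rat}.

Definition fts_wf (delta : fts) : Prop :=
  (forall s a, uniq (delta s a)) /\
  (forall s a mu, mu \in delta s a -> forall x, 0 <= mu x <= 1).

Definition supp_size (mu : {ffun S -> rat}) : nat :=
  \sum_(x : S | (0 < mu x)%R) ratsize (mu x).

Definition fts_size (delta : fts) : nat :=
  (#|S| + \sum_(s : S) \sum_(a : A) \sum_(mu <- delta s a) supp_size mu)%N.

Definition vec_size (q : S -> S -> rat) : nat :=
  (\sum_(s : S) \sum_(t : S) ratsize (q s t))%N.

Variable R : realType.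

Definition deltaR (delta : fts) (s : S) (a : A) : seq (S -> R) :=
  map (fun mu : {ffun S -> rat} => fun x => ratr (mu x)) (delta s a).

Definition mass (mu : S -> R) : R := \big[Num.max/0]_(x : S) mu x.

Definition pum (d : S -> S -> R) : Prop :=
  (forall u v, 0 <= d u v <= 1) /\
  (forall u, d u u = 0) /\
  (forall u v, d u v = d v u) /\
  (forall u v w, d u w <= Num.max (d u v) (d v w)).

Definition coupling (mu eta : S -> R) (x : S -> S -> R) : Prop :=
  (forall u v, 0 <= x u v) /\
  (forall u, \big[Num.max/0]_(v : S) x u v = mu u) /\
  (forall v, \big[Num.max/0]_(u : S) x u v = eta v).

Definition lift (d : S -> S -> R) (mu eta : S -> R) : R :=
  if mass mu != mass eta then 1
  else inf [set r : R | exists x, coupling mu eta x /\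
             r = \big[Num.max/0]_(u : S) \big[Num.max/0]_(v : S)
                    Num.min (d u v) (x u v)].

Definition lift_set (d : S -> S -> R) (mu : S -> R) (Z : seq (S -> R)) : R :=
  match Z with
  | [::] => 1
  | eta0 :: Z' => \big[Num.min/lift d mu eta0]_(eta <- Z') lift d mu eta
  end.

(* Hausdorff distance H_{hat d}; maxima over nonnegative values start at 0 *)
Definition hausdorff (d : S -> S -> R) (Y Z : seq (S -> R)) : R :=
  match Y, Z with
  | [::], [::] => 0
  | _, _ => Num.max (\big[Num.max/0]_(mu <- Y) lift_set d mu Z)
                    (\big[Num.max/0]_(eta <- Z) lift_set d eta Y)
  end.

Definition Delta (gamma : R) (delta : fts) (d : S -> S -> R) : S -> S -> R :=
  fun s t => gamma * \big[Num.max/0]_(a : A)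
                       hausdorff d (deltaR delta s a) (deltaR delta t a).

Definition is_lfp (F : (S -> S -> R) -> (S -> S -> R)) (d : S -> S -> R) : Prop :=
  pum d /\ (forall s t, F d s t = d s t) /\
  (forall d', pum d' -> (forall s t, F d' s t = d' s t) ->
     forall s t, d s t <= d' s t).

End FTS.

From Pilot Require Import Defs.
From HB Require Import structures.
From mathcomp Require Import all_boot all_order all_algebra.
From mathcomp Require Import boolp classical_sets reals.
From mathcomp Require Import ring zify.
Set Implicit Arguments.
Unset Strict Implicit.
Unset Printing Implicit Defensive.
Import Order.TTheory GRing.Theory Num.Theory.
Local Open Scope ring_scope.

(* The infimum in the lifting is attained at a value that is already present.
   Given a coupling of cost r, let w be the largest of 0, 1, the entries of d
   and the membership degrees that is at most r; truncating min(mu u, eta v)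
   at w wherever d u v > w yields again a coupling, of cost at most w.  Hence
   every entry of a fixpoint d of Delta is gamma times either another entry of
   d or a degree of M (or 0, 1).  Following the first alternative makes the
   entry grow strictly, so after fewer than |S|^2 steps d(s,t) = gamma^k c with
   k <= |S|^2 and c a degree of M, and ||gamma^k c|| <= k ||gamma|| + ||c||. *)

Lemma big_selective_ind (T I : Type) (op : T -> T -> T) (idx : T) (K : T -> Prop)
    (r : seq I) (P : pred I) (F : I -> T) :
  (forall x y, op x y = x \/ op x y = y) ->
  K idx -> (forall i, P i -> K (F i)) -> K (\big[op/idx]_(i <- r | P i) F i).
Proof.
by move=> op_sel K0 KF; apply: big_ind => // x y Kx Ky; case: (op_sel x y) => ->.
Qed.

Lemma max_sel (disp : Order.disp_t) (T : orderType disp) (x y : T) :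
  Order.max x y = x \/ Order.max x y = y.
Proof. by case: leP; auto. Qed.

Lemma min_sel (disp : Order.disp_t) (T : orderType disp) (x y : T) :
  Order.min x y = x \/ Order.min x y = y.
Proof. by case: leP; auto. Qed.

Lemma inf_mem_seq (R : realType) (E : set R) (W : seq R) :
  0 \in W -> (forall r, E r -> exists2 e, E e /\ e \in W & e <= r) -> inf E \in W.
Proof.
move=> W0 E_W; have [[r0 Er0]|/nonemptyPn ->] := pselect (exists r, E r); last by rewrite inf0.
have [e0 [Ee0 We0] _] := E_W r0 Er0.
pose m := \big[Num.min/e0]_(w <- W | (w \in W) && `[< E w >]) w.
have [Em Wm] : E m /\ m \in W.
  apply: (big_selective_ind (K := fun z => E z /\ z \in W)) => //.
    exact: min_sel.
  by move=> w /andP[Ww /asboolP].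
have m_lb : lbound E m.
  move=> r Er; have [e [Ee We] le_er] := E_W r Er.
  by apply: le_trans le_er; apply: ge_bigmin_seq; rewrite ?We ?asboolT.
suff -> : inf E = m by [].
by apply/le_anti; rewrite ge_inf ?lb_le_inf //; exists m.
Qed.

Section Couplings.
Variables (R : realType) (S : finType).
Implicit Types (d x : S -> S -> R) (mu eta : S -> R).

Definition coupling_cost d x : R :=
  \big[Num.max/0]_(u : S) \big[Num.max/0]_(v : S) Num.min (d u v) (x u v).

Definition truncated_coupling (w : R) d mu eta : S -> S -> R := fun u v =>
  if d u v <= w then Num.min (mu u) (eta v) else Num.min (Num.min (mu u) (eta v)) w.

Lemma coupling_transpose mu eta x :
  coupling mu eta x -> coupling eta mu (fun v u => x u v).
Proof. by case=> x_ge0 [x_mu x_eta]; split. Qed.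

Lemma truncated_coupling_transpose w d mu eta u v :
  truncated_coupling w (fun v u => d u v) eta mu v u = truncated_coupling w d mu eta u v.
Proof. by rewrite /truncated_coupling minC. Qed.

Section Marginal.
Variables (mu eta : S -> R) (x : S -> S -> R).
Hypothesis x_coupling : coupling mu eta x.

Lemma coupling_marginal_ge0 u : 0 <= mu u.
Proof. by case: x_coupling => _ [<- _]; exact: bigmax_ge_id. Qed.

Lemma coupling_le_marginal u v : x u v <= mu u.
Proof. by case: x_coupling => _ [<- _]; exact: le_bigmax. Qed.

Lemma coupling_marginal_attained u : exists v, x u v = mu u.
Proof.
case: x_coupling => x_ge0 [x_mu _]; rewrite -x_mu.
by have [v _ ->] := eq_bigmax u xpredT (x u) isT (fun v _ => x_ge0 u v); exists v.
Qed.

End Marginal.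

Section Truncation.
Variables (W : seq R) (w r : R).
Hypotheses (w_ge0 : 0 <= w) (w_max : forall y, y \in W -> y <= r -> y <= w).

Lemma truncated_coupling_marginal d mu eta x :
  coupling mu eta x -> (forall u v, Num.min (d u v) (x u v) <= r) ->
  (forall u v, d u v \in W) -> (forall u, mu u \in W) ->
  forall u, \big[Num.max/0]_(v : S) truncated_coupling w d mu eta u v = mu u.
Proof.
move=> x_coupling cost_le dW muW u.
apply/le_anti; rewrite bigmax_le ?(coupling_marginal_ge0 x_coupling u) //=; last first.
  by move=> v _; rewrite /truncated_coupling; case: ifP => _; rewrite !ge_min lexx.
have [v x_uv] := coupling_marginal_attained x_coupling u.
have mu_le_eta : mu u <= eta v.
  by rewrite -x_uv (coupling_le_marginal (coupling_transpose x_coupling)).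
(* One of [d u v], [mu u] is at most [r], and both lie in [W]. *)
have d_or_mu_le_w : (d u v <= w) || (mu u <= w).
  move: (cost_le u v); rewrite x_uv ge_min.
  by case/orP=> [/(w_max (dW u v))|/(w_max (muW u))] ->; rewrite ?orbT.
suff <- : truncated_coupling w d mu eta u v = mu u by exact: le_bigmax.
rewrite /truncated_coupling (min_l mu_le_eta); case: ifP => //= d_gt_w.
by rewrite min_l //; move: d_or_mu_le_w; rewrite d_gt_w.
Qed.

Lemma truncated_coupling_is_coupling d mu eta x :
  coupling mu eta x -> (forall u v, Num.min (d u v) (x u v) <= r) ->
  (forall u v, d u v \in W) -> (forall u, mu u \in W) -> (forall v, eta v \in W) ->
  coupling mu eta (truncated_coupling w d mu eta).
Proof.
move=> x_coupling cost_le dW muW etaW; split; [|split].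
- have mu0 := coupling_marginal_ge0 x_coupling.
  have eta0 := coupling_marginal_ge0 (coupling_transpose x_coupling).
  by move=> u v; rewrite /truncated_coupling; case: ifP => _; rewrite !le_min ?mu0 ?eta0.
- exact: truncated_coupling_marginal x_coupling cost_le dW muW.
- move=> v; have := truncated_coupling_marginal (coupling_transpose x_coupling)
    (fun v u => cost_le u v) (fun v u => dW u v) etaW v.
  by under eq_bigr do rewrite truncated_coupling_transpose.
Qed.

Lemma coupling_cost_truncated d mu eta :
  coupling_cost d (truncated_coupling w d mu eta) <= w.
Proof.
apply: bigmax_le => // u _; apply: bigmax_le => // v _.
by rewrite /truncated_coupling; case: ifP => d_le; rewrite ge_min ?d_le // ge_min lexx orbT.
Qed.

End Truncation.

Lemma coupling_cost_mem (W : seq R) d x :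
  0 \in W -> (forall u v, d u v \in W) -> (forall u v, x u v \in W) ->
  coupling_cost d x \in W.
Proof.
move=> W0 dW xW; pose K z := z \in W.
apply: (big_selective_ind (K := K)) => // [|u _]; first exact: max_sel.
apply: (big_selective_ind (K := K)) => // [|v _]; first exact: max_sel.
by case: (min_sel (d u v) (x u v)) => ->; [exact: dW | exact: xW].
Qed.

Definition lift_candidates d mu eta : seq R :=
  [:: 0, 1 & [seq d u v | u <- enum S, v <- enum S] ++ codom mu ++ codom eta].

Lemma lift_mem_candidates d mu eta : Defs.lift d mu eta \in lift_candidates d mu eta.
Proof.
set W := lift_candidates d mu eta.
have W0 : 0 \in W by rewrite mem_head.
have dW u v : d u v \in W by rewrite /W !in_cons mem_cat allpairs_f ?mem_enum ?orbT.
have muW u : mu u \in W by rewrite /W !in_cons !mem_cat codom_f !orbT.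
have etaW v : eta v \in W by rewrite /W !in_cons !mem_cat codom_f !orbT.
rewrite /Defs.lift; case: ifP => _; first by rewrite !inE eqxx orbT.
apply: (inf_mem_seq W0) => _ [x [x_coupling ->]]; rewrite -/(coupling_cost d x).
have cost_le u v : Num.min (d u v) (x u v) <= coupling_cost d x.
  by rewrite /coupling_cost; apply: (bigmax_sup u) => //; apply: (bigmax_sup v).
set r := coupling_cost d x in cost_le *.
pose w := \big[Num.max/0]_(y <- W | y <= r) y.
have w_ge0 : 0 <= w := bigmax_ge_id _ _ _ _.
have w_le_r : w <= r by apply: bigmax_le => //; exact: bigmax_ge_id.
have w_max y : y \in W -> y <= r -> y <= w by move=> yW y_le; exact: le_bigmax_seq.
have wW : w \in W.
  rewrite /w big_seq_cond; apply: (big_selective_ind (K := fun z => z \in W)) => //.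
    exact: max_sel.
  by move=> y /andP[].
exists (coupling_cost d (truncated_coupling w d mu eta)); last first.
  by apply: le_trans w_le_r; exact: coupling_cost_truncated.
split; first by exists (truncated_coupling w d mu eta); split => //;
  exact: truncated_coupling_is_coupling x_coupling cost_le dW muW etaW.
apply: coupling_cost_mem => // u v; rewrite /truncated_coupling.
have mu_eta_W : Num.min (mu u) (eta v) \in W by case: (min_sel (mu u) (eta v)) => ->.
by case: ifP => _ //; case: (min_sel (Num.min (mu u) (eta v)) w) => ->.
Qed.

End Couplings.

Section Closure.
Variables (R : realType) (S : finType) (K : R -> Prop) (d : S -> S -> R).
Hypotheses (K0 : K 0) (K1 : K 1).

Lemma lift_closed mu eta :
  (forall u v, K (d u v)) -> (forall u, K (mu u)) -> (forall v, K (eta v)) ->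
  K (Defs.lift d mu eta).
Proof.
move=> Kd Kmu Keta; have := lift_mem_candidates d mu eta.
rewrite !in_cons !mem_cat => /predU1P[-> //|/predU1P[-> //|]].
by case/orP=> [/allpairsP[[u v] [_ _ ->]]|/orP[]/codomP[y ->]].
Qed.

Variables (T : eqType) (f : T -> S -> R).

Lemma lift_set_closed mu (l : seq T) :
  {in l, forall j, K (Defs.lift d mu (f j))} -> K (lift_set d mu (map f l)).
Proof.
case: l => [|j0 l] //= K_lift; rewrite big_map big_seq.
apply: (big_selective_ind (K := K)); [exact: min_sel | exact/K_lift/mem_head |].
by move=> j jl; apply: K_lift; rewrite in_cons jl orbT.
Qed.

Lemma hausdorff_closed (l1 l2 : seq T) :
  {in l1 & l2, forall i j, K (Defs.lift d (f i) (f j)) /\ K (Defs.lift d (f j) (f i))} ->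
  K (hausdorff d (map f l1) (map f l2)).
Proof.
move=> K_lift.
set h12 := \big[Num.max/0]_(mu <- map f l1) lift_set d mu (map f l2).
set h21 := \big[Num.max/0]_(eta <- map f l2) lift_set d eta (map f l1).
suff K_max : K (Num.max h12 h21) by case: l1 l2 {K_lift} @h12 @h21 K_max => [|? ?] [|? ?].
case: (max_sel h12 h21) => ->; rewrite /h12 /h21 big_map big_seq;
  apply: (big_selective_ind (K := K)) => //; try exact: max_sel.
- by move=> i il1; apply: lift_set_closed => j jl2; case: (K_lift i j).
- by move=> j jl2; apply: lift_set_closed => i il1; case: (K_lift i j).
Qed.

End Closure.

Section System.
Variables (S A : finType) (delta : fts S A).

Definition fts_degree (c : rat) : Prop :=
  [\/ c = 0, c = 1 | exists s a, exists2 mu, mu \in delta s a & exists x, c = mu x].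

Lemma ratsize_fts_degree c :
  fts_wf delta -> fts_degree c -> (ratsize c <= fts_size delta + 3)%N.
Proof.
(* [ratsize 0 = ratsize 1 = 3] *)
move=> [_ wf_unit] [->|->|[s [a [mu mu_in [x ->]]]]]; try exact: leq_addl.
have /andP[] := wf_unit s a mu mu_in x; rewrite le_eqVlt => /orP[/eqP <- _|mux_gt0 _].
  exact: leq_addl.
apply: (@leq_trans (supp_size mu)); first by rewrite /supp_size (bigD1 x) ?leq_addr.
apply: (@leq_trans (\sum_(nu <- delta s a) supp_size nu)).
  by rewrite (big_rem mu) ?leq_addr.
apply: (@leq_trans (\sum_(a' : A) \sum_(nu <- delta s a') supp_size nu)).
  by rewrite (bigD1 a) ?leq_addr.
apply: (@leq_trans (\sum_(s' : S) \sum_(a' : A) \sum_(nu <- delta s' a') supp_size nu)).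
  by rewrite (bigD1 s) ?leq_addr.
exact: leq_trans (leq_addl #|S| _) (leq_addr 3 _).
Qed.

Lemma Delta_shape (R : realType) (gamma : R) (d : S -> S -> R) s t :
  exists2 z, (exists u v, z = d u v) \/ (exists2 c, fts_degree c & z = ratr c) &
    Delta gamma delta d s t = gamma * z.
Proof.
set K := fun z => _ \/ _.
have K_deg c : fts_degree c -> K (ratr c) by right; exists c.
have K0 : K 0 by rewrite -(rmorph0 ratr); apply: K_deg; apply: Or31.
have K1 : K 1 by rewrite -(rmorph1 ratr); apply: K_deg; apply: Or32.
have K_lift s' a' t' b' : {in delta s' a' & delta t' b', forall m m' : {ffun S -> rat},
    K (Defs.lift d (fun x => ratr (m x)) (fun x => ratr (m' x)))}.
  move=> m m' m_in m'_in; apply: lift_closed => // [u v|u|v]; first by left; exists u, v.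
    by apply: K_deg; apply: Or33; exists s', a', m => //; exists u.
  by apply: K_deg; apply: Or33; exists t', b', m' => //; exists v.
exists (\big[Num.max/0]_a hausdorff d (deltaR R delta s a) (deltaR R delta t a)) => //.
apply: (big_selective_ind (K := K)) => // [|a _]; first exact: max_sel.
rewrite /deltaR; apply: hausdorff_closed => // m m' m_in m'_in.
by split; [exact: K_lift m_in m'_in | exact: K_lift m'_in m_in].
Qed.

End System.

Section Contraction.
Variables (R : numDomainType) (T : finType) (f : T -> R) (g : R) (C : R -> Prop).
Hypotheses (f_ge0 : forall p, 0 <= f p) (g_lt1 : g < 1) (C0 : C 0).
Hypothesis f_step : forall p, (exists q, f p = g * f q) \/ exists2 c, C c & f p = g * c.

Definition strictly_above (p : T) : pred T := [pred q | f p < f q].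

Lemma card_strictly_above_lt p : (#|strictly_above p| < #|T|)%N.
Proof.
rewrite -(cardC (strictly_above p)) -[X in (X < _)%N]addn0 ltn_add2l.
by apply/card_gt0P; exists p; rewrite !inE ltxx.
Qed.

Lemma contraction_pow_above p :
  exists2 j, (j <= #|strictly_above p|)%N & exists2 c, C c & f p = g ^+ j.+1 * c.
Proof.
have [n] := ubnP #|strictly_above p|; elim: n p => // n IH p lt_p_n.
have [[q fpq]|[c Cc fpc]] := f_step p; last by exists 0%N => //; exists c; rewrite ?expr1.
have [fp0|fp_neq0] := eqVneq (f p) 0; first by exists 0%N => //; exists 0; rewrite ?mulr0.
have fq_gt0 : 0 < f q.
  by rewrite lt0r f_ge0 andbT; apply: contraNneq fp_neq0 => fq0; rewrite fpq fq0 mulr0.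
have lt_pq : f p < f q by rewrite fpq gtr_pMl.
have lt_above : (#|strictly_above q| < #|strictly_above p|)%N.
  apply: proper_card; apply/fintype.properP; split.
    by apply/fintype.subsetP => r; rewrite !inE => /(lt_trans lt_pq).
  by exists q; rewrite !inE ?lt_pq ?ltxx.
have [j le_j [c Cc fqc]] := IH q (leq_trans lt_above lt_p_n).
exists j.+1; first exact: leq_ltn_trans le_j lt_above.
by exists c => //; rewrite fpq fqc mulrA -exprS.
Qed.

Lemma contraction_pow p : exists2 j, (j < #|T|)%N & exists2 c, C c & f p = g ^+ j.+1 * c.
Proof.
have [j le_j fp] := contraction_pow_above p.
by exists j => //; exact: leq_ltn_trans le_j (card_strictly_above_lt p).
Qed.

End Contraction.

Lemma bitlen_homo : {homo bitlen : m n / (m <= n)%N}.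
Proof. by move=> m n le_mn; rewrite /bitlen ltnS leq_trunc_log. Qed.

Lemma bitlenM m n : (bitlen (m * n) <= bitlen m + bitlen n)%N.
Proof.
have [->|m_gt0] := posnP m; first by rewrite mul0n leq_addr.
have [->|n_gt0] := posnP n; first by rewrite muln0 leq_addl.
have mn_gt0 : (0 < m * n)%N by rewrite muln_gt0 m_gt0.
rewrite /bitlen -(ltn_exp2l _ _ (ltnSn 1)) expnD.
apply: leq_ltn_trans (trunc_logP (ltnSn 1) mn_gt0) (ltn_mul _ _);
exact: trunc_log_ltn.
Qed.

Section RatSize.
Variables a b : rat.

Lemma numq_denqM :
  (`|numq (a * b)| * (`|denq a| * `|denq b|) = `|numq a| * `|numq b| * `|denq (a * b)|)%N.
Proof.
apply/eqP; rewrite -eqz_nat !PoszM !abszE -!normrM; apply/eqP; congr `|_|.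
by apply: (@intr_inj rat); rewrite !intrM !numqE; ring.
Qed.

Lemma denqM_le : (`|denq (a * b)| <= `|denq a| * `|denq b|)%N.
Proof.
apply: dvdn_leq; first by rewrite muln_gt0 !absz_gt0 !denq_neq0.
have coprime_den_num : coprime `|denq (a * b)| `|numq (a * b)|.
  by rewrite coprime_sym coprime_num_den.
by rewrite -(Gauss_dvdr _ coprime_den_num) numq_denqM dvdn_mull.
Qed.

Lemma numqM_le : (`|numq (a * b)| <= `|numq a| * `|numq b|)%N.
Proof.
have den_gt0 : (0 < `|denq a| * `|denq b|)%N by rewrite muln_gt0 !absz_gt0 !denq_neq0.
by rewrite -(leq_pmul2r den_gt0) numq_denqM leq_mul2l denqM_le orbT.
Qed.

Lemma ratsizeM : (ratsize (a * b) <= ratsize a + ratsize b)%N.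
Proof.
have := bitlenM `|numq a| `|numq b|; have := bitlenM `|denq a| `|denq b|.
have := bitlen_homo numqM_le; have := bitlen_homo denqM_le.
rewrite /ratsize; lia.
Qed.

End RatSize.

Lemma ratsize_expM (g c : rat) k : (ratsize (g ^+ k * c) <= k * ratsize g + ratsize c)%N.
Proof.
elim: k => [|k IH]; first by rewrite expr0 mul1r.
by rewrite exprS -mulrA mulSn -addnA; apply: leq_trans (ratsizeM _ _) _; rewrite leq_add2l.
Qed.

Lemma quintic_bound n f r :
  (n <= f)%N -> (n * (n * (n * n * r + (f + 3))) <= 5 * (f + r + 1) ^ 5)%N.
Proof.
move=> le_nf; set N := (f + r + 1)%N.
have le_nN : (n <= N)%N by rewrite /N; lia.
have le_rN : (r <= N)%N by rewrite /N; lia.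
have le_f3 : (f + 3 <= 4 * N)%N by rewrite /N; lia.
apply: (@leq_trans (N * (N * (N * N * N + 4 * N)))).
  by rewrite !leq_mul // leq_add // !leq_mul.
have : (N ^ 3 <= N ^ 5)%N by rewrite leq_pexp2l // /N addn1.
rewrite !expnS expn0; nia.
Qed.

Theorem lemma7 :
  exists c k : nat,
  forall (R : realType) (S A : finType) (delta : fts S A) (gamma : rat),
    fts_wf delta -> 0 < gamma < 1 ->
    forall d : S -> S -> R,
      is_lfp (Delta (ratr gamma) delta) d ->
      exists q : S -> S -> rat,
        (forall s t, d s t = ratr (q s t)) /\
        (vec_size q <= c * (fts_size delta + ratsize gamma + 1) ^ k)%N.
Proof.
exists 5%N, 5%N => R S A delta gamma wf /andP[_ gamma_lt1] d [[d_unit _] [d_fix _]].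
pose C (z : R) := exists2 c, fts_degree delta c & z = ratr c.
have d_step (p : S * S) : (exists q, d p.1 p.2 = ratr gamma * d q.1 q.2) \/
    exists2 z, C z & d p.1 p.2 = ratr gamma * z.
  have [z [[u [v ->]]|Cz]] := Delta_shape delta (ratr gamma) d p.1 p.2; rewrite d_fix => dp.
    by left; exists (u, v).
  by right; exists z.
have d_ge0 (p : S * S) : 0 <= d p.1 p.2 by case/andP: (d_unit p.1 p.2).
have gamma_lt1R : (ratr gamma : R) < 1 by rewrite -(rmorph1 ratr) ltr_rat.
have C0 : C 0 by exists 0; [exact: Or31 | rewrite rmorph0].
set B := (#|S| * #|S| * ratsize gamma + (fts_size delta + 3))%N.
have d_rat (p : S * S) : exists q : rat, d p.1 p.2 = ratr q /\ (ratsize q <= B)%N.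
  have [j lt_j [_ [c c_deg ->] dp]] := contraction_pow d_ge0 gamma_lt1R C0 d_step p.
  exists (gamma ^+ j.+1 * c); split; first by rewrite dp rmorphM rmorphXn.
  apply: leq_trans (ratsize_expM _ _ _) _.
  by rewrite leq_add ?ratsize_fts_degree // leq_mul2r -card_prod lt_j orbT.
have [q dq] := choice d_rat.
exists (fun s t => q (s, t)); split => [s t|]; first by case: (dq (s, t)).
apply: (@leq_trans (\sum_(s : S) \sum_(t : S) B)).
  by apply: leq_sum => s _; apply: leq_sum => t _; case: (dq (s, t)).
by rewrite !sum_nat_const quintic_bound // /fts_size leq_addr.
Qed.
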